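(* Let $X=(X_1,X_2)$ and $Y$ where $X_1,Y$ are uniform on $\{1,2,3\}$, $X_2\sim\mathrm{Bern}(p)$ with $0<p\le\frac12$, and $X_1,X_2,Y$ are mutually independent. Let $f_1(X,Y)=\mathbf 1\{X_1=Y\}$ and $f_2(X,Y)=X_2$, with Hamming distortion $d_i(a,b)=\mathbf 1\{a\ne b\}$, and let $D_1=0$ and $0\le D_2\le p$ with $D_2<\frac12$. Then every triple $(R_0,R_X,R_Y)$ with $R_0>\log_2 3$, $R_X>H_b(p)-H_b(D_2)$, and $R_Y>H_b(1/3)$ is achievable with distortions $(D_1,D_2)$; in particular, for $R_0>H(X_1|Y)$ the sum rate $R_X+R_Y$ can be made arbitrarily close to $H(f_1(X,Y))+H_b(p)-H_b(D_2)$.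
   Context: $H_b(q)=-q\log_2q-(1-q)\log_2(1-q)$ is the binary entropy function. Setup: finite alphabets, $(X_i,Y_i)_{i\ge1}$ i.i.d. copies of $(X,Y)$, functions $f_i:\mathcal X\times\mathcal Y\to\mathcal F_i$, distortions $d_i:\mathcal F_i\times\mathcal F_i\to\mathbb R_{\ge0}$. An $(n,R_0,R_X,R_Y)$ code consists of encoders $\varphi_0:\mathcal X^n\to\{1,\dots,2^{nR_0}\}$, $\varphi_X:\mathcal X^n\to\{1,\dots,2^{nR_X}\}$, $\varphi_Y:\mathcal Y^n\times\{1,\dots,2^{nR_0}\}\to\{1,\dots,2^{nR_Y}\}$ and decoders $\psi_i:\{1,\dots,2^{nR_X}\}\times\{1,\dots,2^{nR_Y}\}\to\mathcal F_i^n$; with $\hat F_i=\psi_i(\varphi_X(\mathbf X),\varphi_Y(\varphi_0(\mathbf X),\mathbf Y))$ its average distortions are $\frac1n\sum_{j=1}^n\mathbb E\,d_i(f_i(X_j,Y_j),(\hat F_i)_j)$. A triple is achievable with distortions $D_1,D_2$ if for every $\varepsilon>0$ and all large $n$ there is a code with average distortions at most $D_1$, $D_2$. *)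

From Stdlib Require Import Reals Lra List Arith.
Import ListNotations.
Open Scope R_scope.

Definition log2 (x : R) : R := ln x / ln 2.
Definition Hb (q : R) : R := - (q * log2 q) - (1 - q) * log2 (1 - q).

(* all sequences of length n over the (duplicate-free) alphabet list A *)
Fixpoint all_seqs {T : Type} (A : list T) (n : nat) : list (list T) :=
  match n with
  | O => [[]]
  | S n' => flat_map (fun a => map (cons a) (all_seqs A n')) A
  end.

Definition sumR {T : Type} (g : T -> R) (l : list T) : R :=
  fold_right (fun a acc => g a + acc) 0 l.

Fixpoint sum_idx {A : Type} (g : nat -> A -> R) (k : nat) (l : list A) : R :=
  match l with
  | [] => 0
  | a :: l' => g k a + sum_idx g (S k) l'
  end.

Definition seq_prob {X Y : Type} (pmf : X -> Y -> R) (xs : list X) (ys : list Y) : R :=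
  fold_right (fun xy acc => pmf (fst xy) (snd xy) * acc) 1 (combine xs ys).

(* number of messages {1,...,2^{nR}} (floor of 2^{nR}); messages are coded as 0..M-1 *)
Definition nmsg (n : nat) (Rt : R) : nat := Z.to_nat (Int_part (Rpower 2 (INR n * Rt))).

(* average distortion (1/n) sum_j E d(f(X_j,Y_j), (hatF)_j) of the reconstruction
   hatF = psi(phiX(X^n), phiY(phi0(X^n), Y^n)), where psi m m' j is the j-th component *)
Definition avg_dist {X Y F : Type} (XA : list X) (YA : list Y) (pmf : X -> Y -> R)
  (f : X -> Y -> F) (d : F -> F -> R) (n : nat)
  (phi0 : list X -> nat) (phiX : list X -> nat) (phiY : list Y -> nat -> nat)
  (psi : nat -> nat -> nat -> F) : R :=
  sumR (fun xs => sumR (fun ys =>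
      seq_prob pmf xs ys *
      (/ INR n * sum_idx (fun j xy =>
                   d (f (fst xy) (snd xy)) (psi (phiX xs) (phiY ys (phi0 xs)) j))
                 0 (combine xs ys)))
    (all_seqs YA n)) (all_seqs XA n).

Definition achievable {X Y F1 F2 : Type} (XA : list X) (YA : list Y)
  (pmf : X -> Y -> R) (f1 : X -> Y -> F1) (f2 : X -> Y -> F2)
  (d1 : F1 -> F1 -> R) (d2 : F2 -> F2 -> R) (R0 RX RY D1 D2 : R) : Prop :=
  forall eps : R, eps > 0 ->
  exists N : nat, forall n : nat, (N <= n)%nat ->
  exists (phi0 : list X -> nat) (phiX : list X -> nat)
         (phiY : list Y -> nat -> nat)
         (psi1 : nat -> nat -> nat -> F1) (psi2 : nat -> nat -> nat -> F2),
    (forall xs, (phi0 xs < nmsg n R0)%nat) /\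
    (forall xs, (phiX xs < nmsg n RX)%nat) /\
    (forall ys m, (phiY ys m < nmsg n RY)%nat) /\
    avg_dist XA YA pmf f1 d1 n phi0 phiX phiY psi1 <= D1 + eps /\
    avg_dist XA YA pmf f2 d2 n phi0 phiX phiY psi2 <= D2 + eps.

Definition XA_ex : list (nat * bool) :=
  [(1%nat, false); (1%nat, true); (2%nat, false); (2%nat, true); (3%nat, false); (3%nat, true)].
Definition YA_ex : list nat := [1%nat; 2%nat; 3%nat].
Definition pmf_ex (p : R) (x : nat * bool) (y : nat) : R :=
  / 3 * (if snd x then p else 1 - p) * / 3.
Definition f1_ex (x : nat * bool) (y : nat) : bool := Nat.eqb (fst x) y.
Definition f2_ex (x : nat * bool) (y : nat) : bool := snd x.
Definition hamming (a b : bool) : R := if Bool.eqb a b then 0 else 1.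

From Stdlib Require Import Reals Lra Lia Psatz List Bool ZArith.
Import ListNotations.
Open Scope R_scope.

(** The code has three parts.  The common message [phi0] carries X1^n exactly, as a
  base-3 numeral (3^n < 2^(n R0) messages).  The Y-encoder decodes X1^n, forms
  f1^n = (1{X1_j = Y_j})_j, which is i.i.d. Bernoulli(1/3), and compresses it
  with a binary code of distortion eps at rate RY > Hb(1/3).  The X-encoder
  compresses X2^n, i.i.d. Bernoulli(p), with a binary code of distortion D2 + eps
  at rate RX > Hb(p) - Hb(D2).  Both codes come from the binary rate-distortion
  theorem [binary_source_coding]: for 0 < q <= 1/2, 0 <= D <= q and R > Hb q - Hb D,
  codebooks of 2^(nR) words reach expected normalized Hamming distortion D + eps.

  Its proof is a covering argument.  Words of weight w ~ q n are covered, at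
  Hamming radius ~ D n, by words of weight ~ r n with r = (q - D)/(1 - 2D): every
  such word has at least 2^(w Hb(b) + (n - w) Hb(g)) neighbours in that weight
  class (b, g are the crossover probabilities of the backward test channel), so a
  greedy covering needs about 2^(n (Hb q - Hb D)) codewords.  Weights far from q n
  are rare by Chebyshev's inequality. *)

Lemma sumR_cons {T} (g : T -> R) a l : sumR g (a :: l) = g a + sumR g l.
Proof. reflexivity. Qed.

Lemma sumR_app {T} (g : T -> R) l1 l2 : sumR g (l1 ++ l2) = sumR g l1 + sumR g l2.
Proof. induction l1; simpl; [ring | rewrite IHl1; ring]. Qed.

Lemma sumR_map {T U} (g : U -> R) (h : T -> U) l :
  sumR g (map h l) = sumR (fun a => g (h a)) l.
Proof. induction l; simpl; [ring | rewrite IHl; ring]. Qed.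

Lemma sumR_flat_map {T U} (g : U -> R) (h : T -> list U) l :
  sumR g (flat_map h l) = sumR (fun a => sumR g (h a)) l.
Proof. induction l; simpl; [ring | rewrite sumR_app, IHl; ring]. Qed.

Lemma sumR_ext_in {T} (g h : T -> R) l :
  (forall a, In a l -> g a = h a) -> sumR g l = sumR h l.
Proof. induction l; simpl; intros H; [ring |]. rewrite H, IHl; auto. Qed.

Lemma sumR_ext {T} (g h : T -> R) l : (forall a, g a = h a) -> sumR g l = sumR h l.
Proof. intros; apply sumR_ext_in; auto. Qed.

Lemma sumR_le_in {T} (g h : T -> R) l :
  (forall a, In a l -> g a <= h a) -> sumR g l <= sumR h l.
Proof.
  induction l; simpl; intros H; [lra |].
  specialize (IHl (fun a H' => H a (or_intror H'))).
  specialize (H a (or_introl eq_refl)). lra.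
Qed.

Lemma sumR_plus {T} (g h : T -> R) l :
  sumR (fun a => g a + h a) l = sumR g l + sumR h l.
Proof. induction l; simpl; [ring | rewrite IHl; ring]. Qed.

Lemma sumR_scal {T} (c : R) (g : T -> R) l : sumR (fun a => c * g a) l = c * sumR g l.
Proof. induction l; simpl; [ring | rewrite IHl; ring]. Qed.

Lemma sumR_const {T} (c : R) (l : list T) : sumR (fun _ => c) l = INR (length l) * c.
Proof.
  induction l; simpl sumR; [simpl; ring |].
  rewrite IHl; simpl length; rewrite S_INR; ring.
Qed.

Lemma sumR_swap {T U} (h : T -> U -> R) l1 l2 :
  sumR (fun a => sumR (fun b => h a b) l2) l1 = sumR (fun b => sumR (fun a => h a b) l1) l2.
Proof.
  induction l1; simpl.
  - induction l2; simpl; [ring | rewrite <- IHl2; ring].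
  - rewrite IHl1, <- sumR_plus. reflexivity.
Qed.

Lemma sumR_filter {T} (g : T -> R) (P : T -> bool) l :
  sumR g (filter P l) = sumR (fun a => if P a then g a else 0) l.
Proof. induction l; simpl; [ring |]. destruct (P a); simpl; rewrite IHl; ring. Qed.

Lemma sumR_all_seqs_S {T} (A : list T) n g :
  sumR g (all_seqs A (S n)) = sumR (fun a => sumR (fun l => g (a :: l)) (all_seqs A n)) A.
Proof. simpl all_seqs. rewrite sumR_flat_map. apply sumR_ext; intros; apply sumR_map. Qed.

Lemma in_all_seqs {T} (A : list T) n l :
  In l (all_seqs A n) -> length l = n /\ forall a, In a l -> In a A.
Proof.
  revert l; induction n; simpl; intros l H.
  - destruct H as [<- | []]. simpl; split; auto; intros _ [].
  - apply in_flat_map in H. destruct H as [a [Ha H]]. apply in_map_iff in H.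
    destruct H as [l' [<- H]]. apply IHn in H. destruct H as [H1 H2].
    simpl; split; [lia |]. intros b [<- | Hb]; auto.
Qed.

Lemma all_seqs_in {T} (A : list T) l :
  (forall a, In a l -> In a A) -> In l (all_seqs A (length l)).
Proof.
  induction l; simpl; intros H; [auto |]. apply in_flat_map. exists a.
  split; auto. apply in_map. apply IHl; auto.
Qed.

Lemma length_all_seqs {T} (A : list T) n : length (all_seqs A n) = (length A ^ n)%nat.
Proof.
  induction n; simpl; auto. rewrite flat_map_concat_map.
  assert (forall L : list T, length (concat (map (fun a => map (cons a) (all_seqs A n)) L))
                             = (length L * length A ^ n)%nat) as HL.
  { induction L; simpl; auto. rewrite length_app, length_map, IHL, IHn. lia. }
  apply HL.
Qed.

Definition cnt {T} (P : T -> bool) (l : list T) : nat := length (filter P l).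

Lemma cnt_ext {T} (P Q : T -> bool) l : (forall a, P a = Q a) -> cnt P l = cnt Q l.
Proof. unfold cnt; induction l; simpl; intros H; auto. rewrite H. destruct (Q a); simpl; auto. Qed.

Lemma cnt_app {T} (P : T -> bool) l1 l2 : cnt P (l1 ++ l2) = (cnt P l1 + cnt P l2)%nat.
Proof. unfold cnt. rewrite filter_app, length_app. auto. Qed.

Lemma cnt_map {T U} (P : U -> bool) (h : T -> U) l : cnt P (map h l) = cnt (fun a => P (h a)) l.
Proof. unfold cnt; induction l; simpl; auto. destruct (P (h a)); simpl; auto. Qed.

Lemma cnt_le_length {T} (P : T -> bool) l : (cnt P l <= length l)%nat.
Proof. unfold cnt; induction l; simpl; auto. destruct (P a); simpl; lia. Qed.

Lemma cnt_mono_in {T} (P Q : T -> bool) l :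
  (forall a, In a l -> P a = true -> Q a = true) -> (cnt P l <= cnt Q l)%nat.
Proof.
  unfold cnt; induction l; simpl; intros H; auto.
  assert (IH := IHl (fun b Hb => H b (or_intror Hb))). destruct (P a) eqn:E.
  - rewrite (H a (or_introl eq_refl) E). simpl. lia.
  - destruct (Q a); simpl; lia.
Qed.

Lemma cnt_filter {T} (P Q : T -> bool) l : cnt P (filter Q l) = cnt (fun a => Q a && P a) l.
Proof.
  unfold cnt; induction l; simpl; auto.
  destruct (Q a); simpl; auto. destruct (P a); simpl; auto.
Qed.

Lemma cnt_sumR {T} (P : T -> bool) l : INR (cnt P l) = sumR (fun a => if P a then 1 else 0) l.
Proof.
  unfold cnt; induction l; simpl; auto.
  destruct (P a); simpl length; [rewrite S_INR |]; rewrite IHl; ring.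
Qed.

Lemma cnt_complement {T} (P : T -> bool) l :
  (length (filter (fun x => negb (P x)) l) + cnt P l)%nat = length l.
Proof. unfold cnt; induction l; simpl; auto. destruct (P a); simpl; lia. Qed.

Lemma ln2_pos : 0 < ln 2.
Proof. rewrite <- ln_1. apply ln_increasing; lra. Qed.

Lemma ln2_lt1 : ln 2 < 1.
Proof.
  rewrite <- (ln_exp 1). apply ln_increasing; [lra |].
  pose proof (exp_ineq1 1 ltac:(lra)). lra.
Qed.

Lemma ln_le_mono x y : 0 < x -> x <= y -> ln x <= ln y.
Proof. intros Hx [H | H]; [left; apply ln_increasing; auto | rewrite H; lra]. Qed.

Lemma exp_le_mono x y : x <= y -> exp x <= exp y.
Proof. intros [H | H]; [left; apply exp_increasing; auto | rewrite H; lra]. Qed.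

Lemma le_exp_ln x y : 0 < x -> y <= ln x -> exp y <= x.
Proof. intros Hx Hy. rewrite <- (exp_ln x Hx). apply exp_le_mono, Hy. Qed.

Lemma exp_pow x k : exp x ^ k = exp (INR k * x).
Proof.
  induction k; simpl; [rewrite Rmult_0_l, exp_0; ring |].
  rewrite IHk, <- exp_plus. f_equal. destruct k; simpl; ring.
Qed.

Lemma pow_exp_ln r k : 0 < r -> r ^ k = exp (INR k * ln r).
Proof. intros Hr. rewrite <- exp_pow, exp_ln; auto. Qed.

Lemma pow2_exp n : 2 ^ n = exp (INR n * ln 2).
Proof. rewrite <- ln_pow by lra. rewrite exp_ln; auto. apply pow_lt; lra. Qed.

Lemma ln_frac x y z : 0 < x -> 0 < y -> 0 < z -> ln (x * y / z) = ln x + ln y - ln z.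
Proof.
  intros. unfold Rdiv. rewrite ln_mult, ln_mult, ln_Rinv; try lra.
  - apply Rmult_lt_0_compat; lra.
  - apply Rinv_0_lt_compat; lra.
Qed.

Lemma nat_ceil (x : R) : 0 <= x -> exists k : nat, x <= INR k <= x + 1.
Proof.
  intros Hx. destruct (archimed x) as [H1 H2].
  assert (0 <= up x)%Z by (apply le_IZR; simpl; lra).
  exists (Z.to_nat (up x)). rewrite INR_IZR_INZ, Z2Nat.id by auto. lra.
Qed.

Lemma eventually_ge (x : R) : exists N : nat, forall n, (N <= n)%nat -> x <= INR n.
Proof.
  destruct (Rle_dec x 0) as [H | H].
  - exists 0%nat. intros n _. pose proof (pos_INR n). lra.
  - destruct (nat_ceil x ltac:(lra)) as [k Hk]. exists k. intros n Hn. apply le_INR in Hn. lra.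
Qed.

Lemma Rabs_le_between x b : Rabs x <= b -> - b <= x <= b.
Proof. intros H. pose proof (Rle_abs x). pose proof (Rle_abs (- x)). rewrite Rabs_Ropp in *. lra. Qed.

(** ** Bernoulli sequences *)

Definition BA : list bool := [false; true].

Definition bprob (q : R) (bs : list bool) : R :=
  @fold_right R bool (fun b acc => (if b then q else 1 - q) * acc) 1 bs.

Fixpoint wt (l : list bool) : nat :=
  match l with [] => 0%nat | b :: l' => ((if b then 1 else 0) + wt l')%nat end.

Lemma sumB_S n (g : list bool -> R) :
  sumR g (all_seqs BA (S n)) =
  sumR (fun l => g (false :: l)) (all_seqs BA n) + sumR (fun l => g (true :: l)) (all_seqs BA n).
Proof. rewrite sumR_all_seqs_S. simpl. ring. Qed.

Lemma bprob_nonneg q bs : 0 <= q <= 1 -> 0 <= bprob q bs.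
Proof. intros Hq; induction bs; simpl; [lra |]. destruct a; apply Rmult_le_pos; lra. Qed.

Lemma bprob_sum q n : sumR (bprob q) (all_seqs BA n) = 1.
Proof.
  induction n; [simpl; ring |]. rewrite sumB_S. simpl bprob.
  rewrite !sumR_scal. change (fun l => bprob q l) with (bprob q). rewrite IHn. ring.
Qed.

Lemma wt_le x : (wt x <= length x)%nat.
Proof. induction x; simpl; auto. destruct a; lia. Qed.

Lemma bprob_wt r c : bprob r c = r ^ (wt c) * (1 - r) ^ (length c - wt c).
Proof.
  induction c as [|b c IH]; [simpl; ring |]. pose proof (wt_le c).
  cbn [bprob fold_right wt length]. fold (bprob r c). rewrite IH. destruct b.
  - replace (S (length c) - (1 + wt c))%nat with (length c - wt c)%nat by lia. simpl. ring.
  - replace (S (length c) - (0 + wt c))%nat with (S (length c - wt c)) by lia. simpl. ring.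
Qed.

Lemma weight_mean q n : sumR (fun bs => bprob q bs * INR (wt bs)) (all_seqs BA n) = INR n * q.
Proof.
  induction n; [simpl; ring |]. rewrite sumB_S. simpl bprob; simpl wt.
  rewrite (sumR_ext _ (fun l => (1 - q) * (bprob q l * INR (wt l)))) by (intros; simpl; ring).
  rewrite (sumR_ext (fun l => _ * _ * INR (1 + wt l))
             (fun l => q * (bprob q l * INR (wt l)) + q * bprob q l))
    by (intros; rewrite plus_INR; simpl INR; ring).
  rewrite sumR_plus, !sumR_scal, IHn, bprob_sum, S_INR. ring.
Qed.

Lemma weight_second_moment q n :
  sumR (fun bs => bprob q bs * INR (wt bs) ^ 2) (all_seqs BA n) = INR n * q * (1 - q) + (INR n * q) ^ 2.
Proof.
  induction n; [simpl; ring |]. rewrite sumB_S. simpl bprob; simpl wt.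
  rewrite (sumR_ext _ (fun l => (1 - q) * (bprob q l * INR (wt l) ^ 2))) by (intros; simpl; ring).
  rewrite (sumR_ext (fun l => _ * _ * INR (1 + wt l) ^ 2)
             (fun l => q * (bprob q l * INR (wt l) ^ 2)
                       + (2 * q * (bprob q l * INR (wt l)) + q * bprob q l)))
    by (intros; rewrite plus_INR; simpl INR; ring).
  rewrite !sumR_plus, !sumR_scal, IHn, weight_mean, bprob_sum, S_INR. ring.
Qed.

Lemma weight_variance q n :
  sumR (fun bs => bprob q bs * (INR (wt bs) - INR n * q) ^ 2) (all_seqs BA n) = INR n * q * (1 - q).
Proof.
  rewrite (sumR_ext _ (fun bs => bprob q bs * INR (wt bs) ^ 2
                         + ((-2 * INR n * q) * (bprob q bs * INR (wt bs))
                            + (INR n * q) ^ 2 * bprob q bs))) by (intros; ring).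
  rewrite !sumR_plus, !sumR_scal, weight_second_moment, weight_mean, bprob_sum. ring.
Qed.

(** A weight class has at most [r^-v (1-r)^-(n-v)] elements, since its words
    have that reciprocal probability under Bernoulli(r). *)
Lemma weight_class_size r n v : 0 < r < 1 ->
  INR (length (filter (fun c => wt c =? v) (all_seqs BA n))) * (r ^ v * (1 - r) ^ (n - v)) <= 1.
Proof.
  intros Hr. apply Rle_trans with (sumR (bprob r) (all_seqs BA n)); [| rewrite bprob_sum; lra].
  rewrite <- sumR_const, (sumR_ext_in _ (bprob r)).
  - rewrite sumR_filter. apply sumR_le_in. intros c _.
    destruct (wt c =? v); [lra | apply bprob_nonneg; lra].
  - intros c Hc. apply filter_In in Hc. destruct Hc as [Hc E]. apply Nat.eqb_eq in E.
    apply in_all_seqs in Hc. destruct Hc as [Hl _]. rewrite bprob_wt, Hl, E. reflexivity.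
Qed.

Lemma exists_wt n w : (w <= n)%nat -> exists x, In x (all_seqs BA n) /\ wt x = w.
Proof.
  intros Hw. exists (repeat true w ++ repeat false (n - w)). split.
  - replace n with (length (repeat true w ++ repeat false (n - w))) at 2.
    + apply all_seqs_in. intros a _. destruct a; simpl; auto.
    + rewrite length_app, !repeat_length. lia.
  - assert (Happ : forall x y, wt (x ++ y) = (wt x + wt y)%nat)
      by (induction x; simpl; auto; intros; rewrite IHx; lia).
    assert (Hrep : forall b k, wt (repeat b k) = if b then k else 0%nat)
      by (induction k; simpl; destruct b; auto; rewrite IHk; auto).
    rewrite Happ, !Hrep. lia.
Qed.

Lemma pushforward {X Y : Type} (XA : list X) (YA : list Y) (pmf : X -> Y -> R)
  (f : X -> Y -> bool) (pi : R)
  (hsum : forall H : bool -> R,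
     sumR (fun x => sumR (fun y => pmf x y * H (f x y)) YA) XA = pi * H true + (1 - pi) * H false)
  n (G : list bool -> R) :
  sumR (fun xs => sumR (fun ys => seq_prob pmf xs ys *
          G (map (fun xy => f (fst xy) (snd xy)) (combine xs ys))) (all_seqs YA n)) (all_seqs XA n)
  = sumR (fun bs => bprob pi bs * G bs) (all_seqs BA n).
Proof.
  revert G; induction n; intros G.
  - simpl. unfold seq_prob, bprob, sumR. simpl. ring.
  - set (Fb := fun b => sumR (fun xs => sumR (fun ys => seq_prob pmf xs ys *
                 G (b :: map (fun xy => f (fst xy) (snd xy)) (combine xs ys))) (all_seqs YA n))
                 (all_seqs XA n)).
    rewrite sumB_S, sumR_all_seqs_S. simpl bprob.
    rewrite (sumR_ext _ (fun x => sumR (fun y => pmf x y * Fb (f x y)) YA)).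
    + rewrite hsum. unfold Fb. rewrite (IHn (fun l => G (true :: l))), (IHn (fun l => G (false :: l))).
      rewrite <- !sumR_scal. rewrite Rplus_comm. f_equal; apply sumR_ext; intros; ring.
    + intros x.
      rewrite (sumR_ext _ (fun xs => sumR (fun y => sumR (fun ys => pmf x y * (seq_prob pmf xs ys *
                 G (f x y :: map (fun xy => f (fst xy) (snd xy)) (combine xs ys)))) (all_seqs YA n)) YA)).
      * rewrite sumR_swap. apply sumR_ext; intros y. unfold Fb. rewrite <- sumR_scal.
        apply sumR_ext; intros xs. rewrite <- sumR_scal. reflexivity.
      * intros xs. rewrite sumR_all_seqs_S. apply sumR_ext; intros y; apply sumR_ext; intros ys.
        unfold seq_prob; simpl; ring.
Qed.

(** ** Binomial coefficients and the entropy bound *)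

Definition He (x : R) : R := - (x * ln x) - (1 - x) * ln (1 - x).

Lemma He0 : He 0 = 0.
Proof. unfold He. replace (1 - 0) with 1 by ring. rewrite ln_1. ring. Qed.

Lemma Hb_He x : Hb x = He x / ln 2.
Proof. unfold Hb, He, log2. pose proof ln2_pos. field. lra. Qed.

Fixpoint bin (m k : nat) : nat :=
  match m, k with
  | _, O => 1%nat
  | O, S _ => 0%nat
  | S m', S k' => (bin m' k' + bin m' (S k'))%nat
  end.

Lemma bin_pos m k : (k <= m)%nat -> (1 <= bin m k)%nat.
Proof.
  revert k; induction m; intros [|k] Hk; simpl; try lia.
  assert (1 <= bin m k)%nat by (apply IHm; lia). lia.
Qed.

Lemma bin_C m k : (k <= m)%nat -> INR (bin m k) = C m k.
Proof.
  assert (C0 : forall m, C m 0 = 1).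
  { intros m'. unfold C. rewrite Nat.sub_0_r. simpl. field. apply INR_fact_neq_0. }
  assert (Cdiag : forall m, C m m = 1).
  { intros m'. unfold C. rewrite Nat.sub_diag. simpl. field. apply INR_fact_neq_0. }
  assert (bin_gt : forall m k, (m < k)%nat -> bin m k = 0%nat).
  { induction m0; intros [|k'] H; simpl; try lia. rewrite !IHm0; lia. }
  revert k; induction m; intros k Hk.
  - assert (k = 0%nat) by lia; subst. simpl. rewrite C0; reflexivity.
  - destruct k. { simpl. rewrite C0; reflexivity. }
    simpl bin. rewrite plus_INR. destruct (Nat.eq_dec k m).
    + subst. rewrite (bin_gt m (S m)) by lia. rewrite IHm, !Cdiag by lia. simpl; ring.
    + rewrite !IHm by lia. apply pascal. lia.
Qed.

Lemma argmax_nat (g : nat -> R) m :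
  exists k0, (k0 <= m)%nat /\ forall k, (k <= m)%nat -> g k <= g k0.
Proof.
  induction m.
  - exists 0%nat. split; auto. intros k Hk. assert (k = 0%nat) by lia; subst; lra.
  - destruct IHm as [k0 [Hk0 H]]. destruct (Rle_dec (g (S m)) (g k0)).
    + exists k0. split; [lia |]. intros k Hk.
      destruct (Nat.eq_dec k (S m)); [subst; auto | apply H; lia].
    + exists (S m). split; [lia |]. intros k Hk.
      destruct (Nat.eq_dec k (S m)); [subst; lra |]. specialize (H k ltac:(lia)). lra.
Qed.

Lemma sum_f_le_max (g : nat -> R) m c :
  (forall k, (k <= m)%nat -> g k <= c) -> sum_f_R0 g m <= (INR m + 1) * c.
Proof.
  induction m; intros H.
  - specialize (H 0%nat (le_n _)). simpl. lra.
  - rewrite S_INR. change (sum_f_R0 g (S m)) with (sum_f_R0 g m + g (S m)).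
    assert (sum_f_R0 g m <= (INR m + 1) * c) by (apply IHm; intros; apply H; lia).
    specialize (H (S m) (le_n _)). lra.
Qed.

(** The mode [k0] of the Binomial(m, be) distribution lies within 1 of its mean
    and, being the largest of [m+1] probabilities summing to 1, has probability
    at least [1/(m+1)]. *)
Lemma binomial_mode (be : R) (m : nat) : 0 < be < 1 ->
  exists k0, (k0 <= m)%nat /\ Rabs (INR k0 - be * INR m) <= 1 /\
    1 <= (INR m + 1) * (INR (bin m k0) * be ^ k0 * (1 - be) ^ (m - k0)).
Proof.
  intros Hb.
  set (T := fun k => C m k * be ^ k * (1 - be) ^ (m - k)).
  assert (Tpos : forall k, (k <= m)%nat -> 0 < T k).
  { intros k Hk. unfold T. rewrite <- bin_C by auto.
    pose proof (lt_0_INR _ (bin_pos m k Hk)).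
    apply Rmult_lt_0_compat; [apply Rmult_lt_0_compat |]; try (apply pow_lt; lra); lra. }
  assert (Tsum : sum_f_R0 T m = 1).
  { unfold T. rewrite <- binomial. replace (be + (1 - be)) with 1 by ring. apply pow1. }
  assert (Tratio : forall i, (i < m)%nat ->
            T (S i) * (INR i + 1) * (1 - be) = (INR m - INR i) * be * T i).
  { intros i Hi. unfold T. rewrite pascal_step3, minus_INR, S_INR by lia.
    replace (m - i)%nat with (S (m - S i)) by lia. simpl pow. field.
    pose proof (pos_INR i); lra. }
  destruct (argmax_nat T m) as [k0 [Hk0 Hmax]].
  exists k0. split; [auto |]. split.
  - apply Rabs_le. pose proof (pos_INR k0). split.
    + destruct (Rle_dec (be * INR m - 1) (INR k0)) as [E | E]; [lra | exfalso].
      assert (Hk : (k0 < m)%nat).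
      { apply INR_lt. assert (be * INR m <= INR m) by (pose proof (pos_INR m); nra). lra. }
      specialize (Tratio k0 Hk). specialize (Hmax (S k0) ltac:(lia)). pose proof (Tpos k0 Hk0).
      assert ((INR m - INR k0) * be > (INR k0 + 1) * (1 - be)) by nra.
      assert ((INR k0 + 1) * (1 - be) * T (S k0) <= (INR k0 + 1) * (1 - be) * T k0)
        by (apply Rmult_le_compat_l; nra).
      nra.
    + destruct (Rle_dec (INR k0) (be * INR m + 1)) as [E | E]; [lra | exfalso].
      destruct k0 as [|i]; [simpl in E; pose proof (pos_INR m); nra |].
      rewrite S_INR in E.
      specialize (Tratio i ltac:(lia)). specialize (Hmax i ltac:(lia)). pose proof (Tpos (S i) Hk0).
      assert ((INR m - INR i) * be < (INR i + 1) * (1 - be)) by nra.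
      pose proof (pos_INR i). assert (INR i < INR m) by (apply lt_INR; lia).
      assert ((INR m - INR i) * be * T i <= (INR m - INR i) * be * T (S i))
        by (apply Rmult_le_compat_l; nra).
      assert ((INR m - INR i) * be * T (S i) < (INR i + 1) * (1 - be) * T (S i))
        by (apply Rmult_lt_compat_r; lra).
      lra.
  - rewrite bin_C by auto. fold (T k0).
    assert (sum_f_R0 T m <= (INR m + 1) * T k0) by (apply sum_f_le_max; auto). lra.
Qed.

Lemma binomial_entropy_bound (be : R) : 0 <= be < 1 -> exists c, 0 <= c /\
  forall m : nat, exists k : nat, (k <= m)%nat /\ Rabs (INR k - be * INR m) <= 1 /\
    INR m * He be - ln (INR m + 1) - c <= ln (INR (bin m k)).
Proof.
  intros [Hb0 Hb1].
  destruct (Req_dec be 0) as [-> | Hbne].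
  {
    exists 0. split; [lra |]. intros m. exists 0%nat. split; [lia |]. split.
    - simpl. rewrite Rmult_0_l, Rminus_0_r, Rabs_R0. lra.
    - rewrite He0. replace (bin m 0) with 1%nat by (destruct m; reflexivity).
      simpl INR. rewrite ln_1. pose proof (pos_INR m).
      assert (0 <= ln (INR m + 1)) by (rewrite <- ln_1; apply ln_le_mono; lra). lra. }
  set (L := ln be - ln (1 - be)).
  exists (Rabs L). split; [apply Rabs_pos |]. intros m.
  destruct (binomial_mode be m ltac:(lra)) as [k0 [Hk0 [Habs Hmode]]].
  exists k0. split; [auto |]. split; [exact Habs |].
  pose proof (lt_0_INR _ (bin_pos m k0 Hk0)) as Hbin.
  assert (Hpow : 0 < be ^ k0 * (1 - be) ^ (m - k0)) by (apply Rmult_lt_0_compat; apply pow_lt; lra).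
  assert (Hm1 : 0 < INR m + 1) by (pose proof (pos_INR m); lra).
  assert (HT : - ln (INR m + 1) <= ln (INR (bin m k0)) + INR k0 * ln be + INR (m - k0) * ln (1 - be)).
  { assert (Eln : ln (INR (bin m k0) * (be ^ k0 * (1 - be) ^ (m - k0)))
                  = ln (INR (bin m k0)) + INR k0 * ln be + INR (m - k0) * ln (1 - be)).
    { rewrite ln_mult, ln_mult, !ln_pow by (try apply pow_lt; lra). ring. }
    rewrite <- Eln, <- ln_Rinv by lra. apply ln_le_mono; [apply Rinv_0_lt_compat; lra |].
    apply (Rmult_le_reg_l (INR m + 1)); [lra |]. rewrite Rinv_r by lra. rewrite <- Rmult_assoc. lra. }
  rewrite minus_INR in HT by auto.
  assert (INR m * He be = INR k0 * (- ln be) + (INR m - INR k0) * (- ln (1 - be))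
                          + (INR k0 - be * INR m) * L) by (unfold He, L; ring).
  assert (Rabs ((INR k0 - be * INR m) * L) <= Rabs L)
    by (rewrite Rabs_mult; pose proof (Rabs_pos L); nra).
  pose proof (Rle_abs ((INR k0 - be * INR m) * L)). lra.
Qed.

(** ** Hamming distance and its joint distribution with the weight *)

(** Hamming distance of [x] to the word [c] (missing letters of [c] read as 0). *)
Fixpoint hdist (x c : list bool) : nat :=
  match x with
  | [] => 0%nat
  | b :: x' => ((if Bool.eqb b (hd false c) then 0 else 1) + hdist x' (tl c))%nat
  end.

Fixpoint f10 (x c : list bool) : nat :=
  match x, c with
  | b :: x', d :: c' => ((if b then (if d then 0 else 1) else 0) + f10 x' c')%nat
  | _, _ => 0%nat
  end.
Fixpoint f01 (x c : list bool) : nat :=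
  match x, c with
  | b :: x', d :: c' => ((if b then 0 else (if d then 1 else 0)) + f01 x' c')%nat
  | _, _ => 0%nat
  end.

Lemma hdist_le x c : (hdist x c <= length x)%nat.
Proof.
  revert c; induction x; simpl; intros c; auto.
  specialize (IHx (tl c)). destruct (Bool.eqb a (hd false c)); lia.
Qed.

Lemma hdist_nil x : hdist x [] = wt x.
Proof. induction x; simpl; auto. rewrite IHx. destruct a; reflexivity. Qed.

Lemma pat_props x : forall c, length c = length x ->
  hdist x c = (f10 x c + f01 x c)%nat /\ (wt c + f10 x c = wt x + f01 x c)%nat.
Proof.
  induction x as [|b x IH]; intros [|d c] Hl; simpl in Hl; try lia.
  - simpl; auto.
  - destruct (IH c ltac:(lia)) as [H1 H2]. simpl. destruct b, d; simpl; lia.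
Qed.

Lemma cnt_all_S n (P : list bool -> bool) :
  cnt P (all_seqs BA (S n)) =
  (cnt (fun c => P (false :: c)) (all_seqs BA n) + cnt (fun c => P (true :: c)) (all_seqs BA n))%nat.
Proof. simpl. rewrite app_nil_r, cnt_app, !cnt_map. reflexivity. Qed.

Lemma count_pat x : forall i j,
  cnt (fun c => (f10 x c =? i) && (f01 x c =? j)) (all_seqs BA (length x))
  = (bin (wt x) i * bin (length x - wt x) j)%nat.
Proof.
  assert (Hzero : forall (P : list bool -> bool) l, (forall a, P a = false) -> cnt P l = 0%nat)
    by (intros P l H; unfold cnt; induction l; simpl; auto; rewrite H; auto).
  induction x as [|b x IH]; intros i j.
  - simpl. unfold cnt. destruct i, j; reflexivity.
  - simpl length. rewrite cnt_all_S. destruct b; simpl f10; simpl f01; simpl wt.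
    + replace (S (length x) - S (wt x))%nat with (length x - wt x)%nat by lia.
      destruct i as [|i].
      * rewrite (Hzero (fun c => (S (f10 x c) =? 0) && (f01 x c =? j))) by reflexivity.
        rewrite IH. destruct (wt x); simpl; lia.
      * rewrite (cnt_ext (fun c => (S (f10 x c) =? S i) && (f01 x c =? j))
                         (fun c => (f10 x c =? i) && (f01 x c =? j))) by reflexivity.
        rewrite !IH. simpl bin. lia.
    + pose proof (wt_le x).
      replace (S (length x) - wt x)%nat with (S (length x - wt x)) by lia.
      destruct j as [|j].
      * rewrite (Hzero (fun c => (f10 x c =? i) && (S (f01 x c) =? 0)))
          by (intros; rewrite Bool.andb_false_r; reflexivity).
        rewrite IH. destruct (length x - wt x)%nat; simpl; lia.
      * rewrite (cnt_ext (fun c => (f10 x c =? i) && (S (f01 x c) =? S j))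
                         (fun c => (f10 x c =? i) && (f01 x c =? j))) by reflexivity.
        rewrite !IH. simpl bin. lia.
Qed.

Lemma neighbours_in_weight_class x i j tau : (i <= wt x)%nat -> (i + j <= tau)%nat ->
  (bin (wt x) i * bin (length x - wt x) j <=
   cnt (fun c => hdist x c <=? tau)
       (filter (fun c => wt c =? (wt x - i + j)%nat) (all_seqs BA (length x))))%nat.
Proof.
  intros Hi Hij. rewrite cnt_filter, <- count_pat. apply cnt_mono_in.
  intros c Hc Hp. apply andb_prop in Hp. destruct Hp as [Hp1 Hp2].
  apply Nat.eqb_eq in Hp1. apply Nat.eqb_eq in Hp2.
  destruct (in_all_seqs _ _ _ Hc) as [Hcl _].
  destruct (pat_props x c Hcl) as [Hh Hwt].
  apply andb_true_intro. split; [apply Nat.eqb_eq | apply Nat.leb_le]; lia.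
Qed.

Lemma sum_idx_hdist x : forall c,
  sum_idx (fun j b => hamming b (nth j c false)) 0 x = INR (hdist x c).
Proof.
  assert (Hshift : forall (g : nat -> bool -> R) k l, sum_idx g (S k) l = sum_idx (fun j => g (S j)) k l)
    by (intros g k l; revert k; induction l; simpl; intros; auto; rewrite IHl; reflexivity).
  induction x as [|b x IH]; intros c; simpl; [reflexivity |].
  rewrite Hshift, plus_INR.
  replace (sum_idx (fun j b0 => hamming b0 (nth (S j) c false)) 0 x) with (INR (hdist x (tl c))).
  - destruct c as [|d c]; simpl; unfold hamming; destruct b; try destruct d; simpl; ring.
  - rewrite <- IH. destruct c; simpl; auto.
    clear IH. generalize 0%nat. induction x; simpl; auto. intros k. rewrite IHx. destruct k; reflexivity.
Qed.

Lemma sum_idx_map {T U} (g : nat -> U -> R) (h : T -> U) k l :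
  sum_idx g k (map h l) = sum_idx (fun j a => g j (h a)) k l.
Proof. revert k; induction l; simpl; intros; auto. rewrite IHl; reflexivity. Qed.

(** ** Greedy covering *)

Lemma above_avg {T} (g : T -> R) l : l <> [] -> exists c, In c l /\ sumR g l <= INR (length l) * g c.
Proof.
  induction l as [|a l IH]; intros H; [congruence |].
  destruct l as [|b l'].
  - exists a. simpl. split; auto. lra.
  - destruct (IH ltac:(congruence)) as [c [Hc Hs]].
    rewrite sumR_cons. change (length (a :: b :: l')) with (S (length (b :: l'))). rewrite S_INR.
    destruct (Rle_dec (g c) (g a)).
    + exists a. split; [left; auto |].
      assert (INR (length (b :: l')) * g c <= INR (length (b :: l')) * g a)
        by (apply Rmult_le_compat_l; [apply pos_INR | auto]). lra.
    + exists c. split; [right; auto | lra].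
Qed.

Section GreedyCovering.
Variables (T : Type) (rel : T -> T -> bool) (Tl : list T) (a : R).
Hypothesis Ha : 0 < a.

(** One greedy step: if every point of [Pts] is related to at least [a] candidates
    of [Tl], some candidate covers a fraction [a / |Tl|] of [Pts] (double counting). *)
Lemma greedy_step (Pts : list T) : Pts <> [] ->
  (forall x, In x Pts -> a <= INR (cnt (rel x) Tl)) ->
  exists c, In c Tl /\
    INR (length (filter (fun x => negb (rel x c)) Pts)) <= INR (length Pts) * (1 - a / INR (length Tl)).
Proof.
  intros HS Hdeg. destruct Pts as [|s Pts0]; [congruence |]. set (Pts := s :: Pts0) in *.
  assert (Hs := Hdeg s (or_introl eq_refl)). pose proof (le_INR _ _ (cnt_le_length (rel s) Tl)).
  assert (HTr : 0 < INR (length Tl)) by lra.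
  assert (TlNE : Tl <> []) by (intros E; rewrite E in HTr; simpl in HTr; lra).
  assert (Hdc : a * INR (length Pts) <= sumR (fun c => INR (cnt (fun x => rel x c) Pts)) Tl).
  { rewrite (sumR_ext _ (fun c => sumR (fun x => if rel x c then 1 else 0) Pts))
      by (intros; apply cnt_sumR).
    rewrite <- sumR_swap, (Rmult_comm a), <- sumR_const.
    apply sumR_le_in. intros x Hx. rewrite <- cnt_sumR. auto. }
  destruct (above_avg (fun c => INR (cnt (fun x => rel x c) Pts)) Tl TlNE) as [c [Hc Hcs]].
  exists c. split; [exact Hc |].
  pose proof (cnt_complement (fun x => rel x c) Pts) as E.
  apply (f_equal INR) in E. rewrite plus_INR in E.
  assert (INR (length Pts) * a / INR (length Tl) <= INR (cnt (fun x => rel x c) Pts)).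
  { apply (Rmult_le_reg_r (INR (length Tl))); auto. unfold Rdiv. rewrite Rmult_assoc, Rinv_l; lra. }
  unfold Rdiv in *. lra.
Qed.

Lemma greedy_cover K (Pts : list T) :
  (forall x, In x Pts -> a <= INR (cnt (rel x) Tl)) ->
  INR (length Pts) * (1 - a / INR (length Tl)) ^ K < 1 ->
  exists Cl, (length Cl <= K)%nat /\ forall x, In x Pts -> exists c, In c Cl /\ rel x c = true.
Proof.
  revert Pts. induction K as [|K IH]; intros Pts Hdeg Hsz.
  - exists []. split; [simpl; lia |]. destruct Pts as [|s Pts].
    + intros x [].
    + simpl length in Hsz. rewrite S_INR in Hsz. simpl in Hsz. pose proof (pos_INR (length Pts)). lra.
  - destruct Pts as [|s Pts0]; [exists []; split; [simpl; lia | intros x []] |].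
    set (Pts := s :: Pts0) in *.
    destruct (greedy_step Pts ltac:(discriminate) Hdeg) as [c [Hc Hrest]].
    set (Pts' := filter (fun x => negb (rel x c)) Pts) in *.
    assert (Hu : 0 <= 1 - a / INR (length Tl)).
    { assert (Hs := Hdeg s (or_introl eq_refl)). pose proof (le_INR _ _ (cnt_le_length (rel s) Tl)).
      assert (a / INR (length Tl) <= 1); [| lra].
      apply (Rmult_le_reg_r (INR (length Tl))); [lra |].
      unfold Rdiv. rewrite Rmult_assoc, Rinv_l; lra. }
    destruct (IH Pts') as [Cl [HCl Hcov]].
    + intros x Hx. apply Hdeg. apply filter_In in Hx. tauto.
    + apply Rle_lt_trans
        with (INR (length Pts) * (1 - a / INR (length Tl)) * (1 - a / INR (length Tl)) ^ K).
      * apply Rmult_le_compat_r; [apply pow_le |]; auto.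
      * simpl pow in Hsz. lra.
    + exists (c :: Cl). split; [simpl; lia |].
      intros x Hx. destruct (rel x c) eqn:E.
      * exists c. split; [left; reflexivity | exact E].
      * destruct (Hcov x) as [c' [H1 H2]]; [apply filter_In; rewrite E; auto |].
        exists c'. split; [right; exact H1 | exact H2].
Qed.

(** Quantitative form: at most [|Tl| n / a + 2] codewords cover a set of at most
    [2^n] points, because [(1 - u)^K <= exp(-u K) < 2^-n] for [K > n / u]. *)
Lemma greedy_cover_count (Pts : list T) (n : nat) :
  1 <= a -> INR (length Pts) <= 2 ^ n ->
  (forall x, In x Pts -> a <= INR (cnt (rel x) Tl)) ->
  exists Cl, INR (length Cl) <= INR (length Tl) * INR n / a + 2 /\
    forall x, In x Pts -> exists c, In c Cl /\ rel x c = true.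
Proof.
  intros Ha1 HS Hdeg.
  assert (Hx : 0 <= INR (length Tl) * INR n / a)
    by (apply Rmult_le_pos; [apply Rmult_le_pos; apply pos_INR | left; apply Rinv_0_lt_compat; lra]).
  destruct Pts as [|s Pts0].
  { exists []. split; [simpl; lra | intros x []]. }
  set (Pts := s :: Pts0) in *.
  assert (Hs := Hdeg s (or_introl eq_refl)). pose proof (le_INR _ _ (cnt_le_length (rel s) Tl)).
  assert (HT : 0 < INR (length Tl)) by lra.
  destruct (nat_ceil _ Hx) as [k Hk].
  destruct (greedy_cover (S k) Pts Hdeg) as [Cl [HCl Hcov]].
  - set (u := a / INR (length Tl)).
    assert (Hu : 0 < u <= 1).
    { unfold u. split; [apply Rdiv_lt_0_compat; lra |].
      apply (Rmult_le_reg_r (INR (length Tl))); auto. unfold Rdiv. rewrite Rmult_assoc, Rinv_l; lra. }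
    assert (H1 : (1 - u) ^ S k <= exp (INR (S k) * - u)).
    { rewrite <- exp_pow. apply pow_incr. pose proof (exp_ineq1_le (- u)). lra. }
    assert (H2 : INR n < INR (S k) * u).
    { rewrite S_INR. unfold u.
      assert (INR n <= INR k * (a / INR (length Tl))).
      { apply (Rmult_le_reg_r (INR (length Tl) / a)); [apply Rdiv_lt_0_compat; lra |].
        replace (INR k * (a / INR (length Tl)) * (INR (length Tl) / a)) with (INR k) by (field; lra).
        unfold Rdiv in *. lra. }
      assert (0 < a / INR (length Tl)) by (apply Rdiv_lt_0_compat; lra). lra. }
    assert (H3 : exp (INR (S k) * - u) < exp (- (INR n * ln 2))).
    { apply exp_increasing. pose proof ln2_lt1. pose proof ln2_pos. pose proof (pos_INR n). nra. }
    assert (H4 : 2 ^ n * exp (- (INR n * ln 2)) = 1).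
    { rewrite pow2_exp, <- exp_plus, Rplus_opp_r. apply exp_0. }
    assert (0 <= (1 - u) ^ S k) by (apply pow_le; lra).
    apply Rle_lt_trans with (2 ^ n * exp (INR (S k) * - u)).
    + apply Rmult_le_compat; auto; apply pos_INR.
    + rewrite <- H4. apply Rmult_lt_compat_l; auto. apply pow_lt; lra.
  - exists Cl. split; auto. apply le_INR in HCl. rewrite S_INR in HCl. lra.
Qed.

End GreedyCovering.

(** ** The backward test channel of the binary rate-distortion function

  Codeword letters are Bernoulli(r) with [r = (q - D)/(1 - 2D)]; a source 1 is
  reproduced as 0 with probability [b] and a source 0 as 1 with probability [g].
  Then the expected distortion is [D], the reproduction is Bernoulli(r), and the
  mutual information [He r - q He b - (1 - q) He g] equals [He q - He D]. *)

Definition rpar q D := (q - D) / (1 - 2 * D).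
Definition bpar q D := (1 - rpar q D) * D / q.
Definition gpar q D := rpar q D * D / (1 - q).

Lemma test_channel_params q D : 0 < q -> q <= / 2 -> 0 <= D < q ->
  0 < rpar q D < 1 /\ 0 <= bpar q D < 1 /\ 0 <= gpar q D < 1 /\
  q * bpar q D + (1 - q) * gpar q D = D /\ q * (1 - bpar q D) + (1 - q) * gpar q D = rpar q D.
Proof.
  intros Hq Hq2 [HD0 HDq].
  assert (Hr : 0 < rpar q D < 1).
  { unfold rpar. split; [apply Rdiv_lt_0_compat; lra |].
    apply (Rmult_lt_reg_r (1 - 2 * D)); [lra |]. unfold Rdiv. rewrite Rmult_assoc, Rinv_l; lra. }
  assert (Hqr : q = rpar q D * (1 - 2 * D) + D) by (unfold rpar; field; lra).
  unfold bpar, gpar. set (r := rpar q D) in *.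
  assert (Qb : q * ((1 - r) * D / q) = (1 - r) * D) by (field; lra).
  assert (Qg : (1 - q) * (r * D / (1 - q)) = r * D) by (field; lra).
  split; [exact Hr |]. split; [| split; [| split]].
  - split; [apply Rmult_le_pos; [nra | left; apply Rinv_0_lt_compat; lra] |].
    apply (Rmult_lt_reg_r q); auto. unfold Rdiv. rewrite Rmult_assoc, Rinv_l; nra.
  - split; [apply Rmult_le_pos; [nra | left; apply Rinv_0_lt_compat; lra] |].
    apply (Rmult_lt_reg_r (1 - q)); [lra |]. unfold Rdiv. rewrite Rmult_assoc, Rinv_l; nra.
  - lra.
  - replace (q * (1 - (1 - r) * D / q)) with (q - (1 - r) * D) by (field; lra).
    rewrite Qg. nra.
Qed.

Lemma test_channel_entropy q D : 0 < q -> q <= / 2 -> 0 <= D < q ->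
  He (rpar q D) - q * He (bpar q D) - (1 - q) * He (gpar q D) = He q - He D.
Proof.
  intros Hq Hq2 [HD0 HDq].
  destruct (test_channel_params q D Hq Hq2 (conj HD0 HDq)) as (Hr & _).
  assert (Hqr : q = rpar q D * (1 - 2 * D) + D) by (unfold rpar; field; lra).
  unfold bpar, gpar. set (r := rpar q D) in *. clearbody r.
  destruct (Req_dec D 0) as [-> | HD].
  { rewrite !Rmult_0_r, !Rdiv_0_l, He0. replace r with q by lra. ring. }
  (* all logarithms are expressed through those of q, 1-q, r, 1-r, D and 1-D *)
  assert (Eb1 : 1 - (1 - r) * D / q = r * (1 - D) / q) by (rewrite Hqr; field; lra).
  assert (Eg1 : 1 - r * D / (1 - q) = (1 - r) * (1 - D) / (1 - q)) by (rewrite Hqr; field; lra).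
  unfold He. rewrite Eb1, Eg1, !ln_frac by lra.
  set (a1 := ln q). set (a2 := ln (1 - q)). set (a3 := ln r). set (a4 := ln (1 - r)).
  set (a5 := ln D). set (a6 := ln (1 - D)). clearbody a1 a2 a3 a4 a5 a6.
  subst q. field. split; lra.
Qed.

(** ** Covering one weight class *)

(** Log-odds of the codeword letter, and the sensitivity of the covering exponent
    to the deviation of the source weight [w] from [q n]. *)
Definition tilt q D := ln (rpar q D) - ln (1 - rpar q D).
Definition slope q D :=
  Rabs (- tilt q D * (1 - bpar q D - gpar q D) - He (bpar q D) + He (gpar q D)).

Lemma flip_radius q D (n w i j : R) : 0 < q -> q <= / 2 -> 0 <= D < q ->
  Rabs (i - bpar q D * w) <= 1 -> Rabs (j - gpar q D * (n - w)) <= 1 ->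
  i + j <= D * n + Rabs (w - q * n) + 2.
Proof.
  intros Hq Hq2 HD Hi Hj.
  destruct (test_channel_params q D Hq Hq2 HD) as (_ & Hb & Hg & Hmix & _).
  set (b := bpar q D) in *. set (g := gpar q D) in *.
  apply Rabs_le_between in Hi. apply Rabs_le_between in Hj.
  assert (b * w + g * (n - w) = (b - g) * (w - q * n) + D * n) by (rewrite <- Hmix; ring).
  assert ((b - g) * (w - q * n) <= Rabs (w - q * n)).
  { apply Rle_trans with (Rabs ((b - g) * (w - q * n))); [apply Rle_abs |].
    rewrite Rabs_mult. assert (Rabs (b - g) <= 1) by (apply Rabs_le; lra).
    pose proof (Rabs_pos (w - q * n)). nra. }
  lra.
Qed.

(** Covering exponent: the log of [|weight class v| / (C(w,i) C(n-w,j))], with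
    [v = w - i + j], is at most [n (He q - He D) + |w - q n| slope + O(ln n)]. *)
Lemma cover_exponent q D (n w i j c1 c2 : R) : 0 < q -> q <= / 2 -> 0 <= D < q ->
  0 <= w <= n ->
  Rabs (i - bpar q D * w) <= 1 -> Rabs (j - gpar q D * (n - w)) <= 1 ->
  - ((w - i + j) * ln (rpar q D) + (n - (w - i + j)) * ln (1 - rpar q D))
  - ((w * He (bpar q D) - ln (w + 1) - c1) + ((n - w) * He (gpar q D) - ln (n - w + 1) - c2))
  <= n * (He q - He D) + Rabs (w - q * n) * slope q D + (2 * Rabs (tilt q D) + c1 + c2)
     + 2 * ln (n + 1).
Proof.
  intros Hq Hq2 HD Hw Hi Hj.
  destruct (test_channel_params q D Hq Hq2 HD) as (_ & _ & _ & _ & Hr).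
  pose proof (test_channel_entropy q D Hq Hq2 HD) as Hent.
  unfold slope, tilt. set (r := rpar q D) in *. set (b := bpar q D) in *. set (g := gpar q D) in *.
  set (Lr := ln r - ln (1 - r)).
  assert (Hid : - ((w - i + j) * ln r + (n - (w - i + j)) * ln (1 - r)) - w * He b - (n - w) * He g
      = n * (He q - He D) + (w - q * n) * (- Lr * (1 - b - g) - He b + He g)
        - Lr * ((j - g * (n - w)) - (i - b * w))).
  { rewrite <- Hent. replace (He r) with (- (r * ln r) - (1 - r) * ln (1 - r)) by reflexivity.
    unfold Lr. clearbody r b g.
    set (lr := ln r). set (lr1 := ln (1 - r)). set (hb := He b). set (hg := He g).
    clearbody lr lr1 hb hg. rewrite <- Hr. ring. }
  assert (T1 : (w - q * n) * (- Lr * (1 - b - g) - He b + He g)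
               <= Rabs (w - q * n) * Rabs (- Lr * (1 - b - g) - He b + He g))
    by (rewrite <- Rabs_mult; apply Rle_abs).
  assert (T2 : - Lr * ((j - g * (n - w)) - (i - b * w)) <= 2 * Rabs Lr).
  { apply Rle_trans with (Rabs (- Lr * ((j - g * (n - w)) - (i - b * w)))); [apply Rle_abs |].
    rewrite Rabs_mult, Rabs_Ropp.
    assert (Rabs ((j - g * (n - w)) - (i - b * w)) <= 2).
    { unfold Rminus at 1. apply Rle_trans with (Rabs (j - g * (n - w)) + Rabs (- (i - b * w)));
        [apply Rabs_triang |]. rewrite Rabs_Ropp. lra. }
    pose proof (Rabs_pos Lr). nra. }
  assert (T3 : ln (w + 1) <= ln (n + 1)) by (apply ln_le_mono; lra).
  assert (T4 : ln (n - w + 1) <= ln (n + 1)) by (apply ln_le_mono; lra).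
  lra.
Qed.

Lemma weight_class_size_exp r n v : 0 < r < 1 -> (v <= n)%nat ->
  INR (length (filter (fun c => wt c =? v) (all_seqs BA n)))
  <= exp (- (INR v * ln r + (INR n - INR v) * ln (1 - r))).
Proof.
  intros Hr Hv. pose proof (weight_class_size r n v Hr) as H.
  rewrite (pow_exp_ln r v), (pow_exp_ln (1 - r) (n - v)), <- exp_plus in H by lra.
  rewrite minus_INR in H by auto.
  apply (Rmult_le_reg_r (exp (INR v * ln r + (INR n - INR v) * ln (1 - r)))); [apply exp_pos |].
  rewrite <- exp_plus, Rplus_opp_l, exp_0. lra.
Qed.

Lemma codeword_count_bound (A a n E1 Y E : R) : 1 <= a <= A -> A <= exp E1 -> exp Y <= a ->
  E1 - Y <= E -> 0 <= n -> A * n / a + 2 <= (n + 2) * exp E.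
Proof.
  intros Ha HA Hay HE Hn.
  assert (HAa : A / a <= exp (E1 - Y)).
  { unfold Rminus. rewrite exp_plus, exp_Ropp. unfold Rdiv.
    apply Rmult_le_compat; [lra | left; apply Rinv_0_lt_compat; lra | exact HA |
                            apply Rinv_le_contravar; [apply exp_pos | exact Hay]]. }
  assert (HAa1 : 1 <= A / a)
    by (apply (Rmult_le_reg_r a); [lra |]; unfold Rdiv; rewrite Rmult_assoc, Rinv_l; lra).
  replace (A * n / a) with (n * (A / a)) by (field; lra).
  apply Rle_trans with ((n + 2) * (A / a)); [nra |].
  apply Rmult_le_compat_l; [lra |]. apply Rle_trans with (1 := HAa). apply exp_le_mono. lra.
Qed.

Lemma weight_class_greedy n w i j tau : (w <= n)%nat -> (i <= w)%nat -> (j <= n - w)%nat ->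
  (i + j <= tau)%nat ->
  INR (bin w i * bin (n - w) j)
    <= INR (length (filter (fun c => wt c =? (w - i + j)%nat) (all_seqs BA n))) /\
  exists Cl : list (list bool),
    INR (length Cl) <= INR (length (filter (fun c => wt c =? (w - i + j)%nat) (all_seqs BA n)))
                       * INR n / INR (bin w i * bin (n - w) j) + 2 /\
    forall x, In x (all_seqs BA n) -> wt x = w -> exists c, In c Cl /\ (hdist x c <= tau)%nat.
Proof.
  intros Hw Hi Hj Hij.
  set (Tl := filter (fun c => wt c =? (w - i + j)%nat) (all_seqs BA n)).
  set (Sw := filter (fun x => wt x =? w) (all_seqs BA n)).
  set (a := INR (bin w i * bin (n - w) j)).
  assert (Ha : 1 <= a).
  { unfold a. rewrite mult_INR. pose proof (le_INR _ _ (bin_pos w i Hi)).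
    pose proof (le_INR _ _ (bin_pos (n - w) j Hj)). simpl INR in *. nra. }
  assert (HSw : forall x, In x (all_seqs BA n) -> wt x = w -> In x Sw)
    by (intros x Hx Hxw; apply filter_In; split; [auto | apply Nat.eqb_eq; auto]).
  assert (Hdeg : forall x, In x Sw -> a <= INR (cnt (fun c => hdist x c <=? tau) Tl)).
  { intros x Hx. apply filter_In in Hx. destruct Hx as [Hx Hxw]. apply Nat.eqb_eq in Hxw.
    destruct (in_all_seqs _ _ _ Hx) as [Hxl _]. apply le_INR.
    unfold Tl. rewrite <- Hxl, <- Hxw. apply neighbours_in_weight_class; lia. }
  split.
  - destruct (exists_wt n w Hw) as [x0 [Hx0 Hx0w]].
    pose proof (Hdeg x0 (HSw x0 Hx0 Hx0w)).
    pose proof (le_INR _ _ (cnt_le_length (fun c => hdist x0 c <=? tau) Tl)). lra.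
  - assert (HS : INR (length Sw) <= 2 ^ n).
    { replace (2 ^ n) with (INR (length (all_seqs BA n)))
        by (rewrite length_all_seqs, pow_INR; simpl; f_equal; ring).
      apply le_INR, cnt_le_length. }
    destruct (greedy_cover_count _ (fun x c => hdist x c <=? tau) Tl a ltac:(lra) Sw n Ha HS Hdeg)
      as [Cl [HCl Hcov]].
    exists Cl. split; [exact HCl |].
    intros x Hx Hxw. destruct (Hcov x (HSw x Hx Hxw)) as [c [Hc1 Hc2]].
    exists c. split; [auto | apply Nat.leb_le; auto].
Qed.

(** A weight class [w] is covered at radius [D n + |w - q n| + 2] by about
    [exp(n (He q - He D) + |w - q n| slope)] words: choose [i ~ b w] and
    [j ~ g (n - w)] maximizing the binomial coefficients in [weight_class_greedy]. *)
Lemma weight_class_cover q D : 0 < q -> q <= / 2 -> 0 <= D < q -> exists K2,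
  forall n w tau, (w <= n)%nat -> D * INR n + Rabs (INR w - q * INR n) + 2 <= INR tau ->
  exists Cl : list (list bool),
    INR (length Cl) <= (INR n + 2) * exp (INR n * (He q - He D)
                         + Rabs (INR w - q * INR n) * slope q D + K2 + 2 * ln (INR n + 1)) /\
    forall x, In x (all_seqs BA n) -> wt x = w -> exists c, In c Cl /\ (hdist x c <= tau)%nat.
Proof.
  intros Hq Hq2 HD.
  destruct (test_channel_params q D Hq Hq2 HD) as (Hr & Hb & Hg & _).
  destruct (binomial_entropy_bound (bpar q D) Hb) as [c1 [_ Hbl]].
  destruct (binomial_entropy_bound (gpar q D) Hg) as [c2 [_ Hgl]].
  exists (2 * Rabs (tilt q D) + c1 + c2). intros n w tau Hw Htau.
  destruct (Hbl w) as [i [Hi1 [Hi2 Hi3]]].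
  destruct (Hgl (n - w)%nat) as [j [Hj1 [Hj2 Hj3]]]. rewrite minus_INR in Hj2, Hj3 by auto.
  pose proof (flip_radius q D (INR n) (INR w) (INR i) (INR j) Hq Hq2 HD Hi2 Hj2) as Hrad.
  destruct (weight_class_greedy n w i j tau Hw Hi1 Hj1 ltac:(apply INR_le; rewrite plus_INR; lra))
    as [HaA [Cl [HCl Hcov]]].
  exists Cl. split; [| exact Hcov].
  set (v := (w - i + j)%nat) in *.
  set (A := INR (length (filter (fun c => wt c =? v) (all_seqs BA n)))) in *.
  set (a := INR (bin w i * bin (n - w) j)) in *.
  assert (HA : A <= exp (- (INR v * ln (rpar q D) + (INR n - INR v) * ln (1 - rpar q D))))
    by (apply weight_class_size_exp; [auto | unfold v; lia]).
  set (Y := (INR w * He (bpar q D) - ln (INR w + 1) - c1)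
            + ((INR n - INR w) * He (gpar q D) - ln (INR n - INR w + 1) - c2)).
  pose proof (le_INR _ _ (bin_pos w i Hi1)) as Hbi.
  pose proof (le_INR _ _ (bin_pos (n - w) j Hj1)) as Hbj.
  simpl INR in Hbi, Hbj.
  assert (Ha : 1 <= a) by (unfold a; rewrite mult_INR; nra).
  assert (Hay : exp Y <= a).
  { apply le_exp_ln; [lra |]. unfold a, Y. rewrite mult_INR, ln_mult by lra. lra. }
  assert (Hv : INR v = INR w - INR i + INR j) by (unfold v; rewrite plus_INR, minus_INR by auto; ring).
  pose proof (cover_exponent q D (INR n) (INR w) (INR i) (INR j) c1 c2 Hq Hq2 HD
                ltac:(split; [apply pos_INR | apply le_INR; auto]) Hi2 Hj2) as Hexp.
  rewrite <- Hv in Hexp. fold Y in Hexp.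
  apply Rle_trans with (1 := HCl).
  apply (codeword_count_bound A a (INR n)
           (- (INR v * ln (rpar q D) + (INR n - INR v) * ln (1 - rpar q D))) Y);
    [lra | auto | auto | lra | apply pos_INR].
Qed.

(** ** The binary rate-distortion theorem *)

Definition code_distortion (q : R) (n : nat) (L : list (list bool)) (enc : list bool -> nat) : R :=
  sumR (fun bs => bprob q bs * (/ INR n * INR (hdist bs (nth (enc bs) L [])))) (all_seqs BA n).

(** Index of the first element of [l] satisfying [P] ([length l] if none). *)
Fixpoint findi {T} (P : T -> bool) (l : list T) : nat :=
  match l with [] => 0%nat | c :: l' => if P c then 0%nat else S (findi P l') end.

Lemma findi_le {T} (P : T -> bool) l : (findi P l <= length l)%nat.
Proof. induction l; simpl; auto. destruct (P a); lia. Qed.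

Lemma findi_spec {T} (P : T -> bool) l d : (exists c, In c l /\ P c = true) ->
  P (nth (findi P l) l d) = true.
Proof.
  induction l as [|c l IH]; intros [c' [Hin Hp]]; [destruct Hin |].
  simpl. destruct (P c) eqn:E; auto.
  destruct Hin as [-> | Hin]; [congruence | apply IH; eauto].
Qed.

Definition nearest (tau : nat) (L : list (list bool)) (bs : list bool) : nat :=
  findi (fun c => hdist bs c <=? tau) L.

(** A codebook covering all words of typical weight [|wt - q n| <= de n] at radius
    [tau] has distortion [tau / n] plus the Chebyshev bound for atypical words. *)
Lemma covering_code_distortion q n tau de L : 0 <= q <= 1 -> (1 <= n)%nat -> 0 < de ->
  (forall bs, In bs (all_seqs BA n) -> Rabs (INR (wt bs) - q * INR n) <= de * INR n ->
     exists c, In c L /\ (hdist bs c <= tau)%nat) ->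
  code_distortion q n L (nearest tau L) <= INR tau / INR n + q * (1 - q) / (de ^ 2 * INR n).
Proof.
  intros Hq Hn Hde Hcov. pose proof (le_INR _ _ Hn) as Hnn. simpl INR in Hnn.
  assert (Hden : 0 < (de * INR n) ^ 2) by (apply pow_lt; nra).
  assert (Hpt : forall bs, In bs (all_seqs BA n) ->
    / INR n * INR (hdist bs (nth (nearest tau L bs) L []))
    <= INR tau / INR n + (INR (wt bs) - INR n * q) ^ 2 / (de * INR n) ^ 2).
  { intros bs Hbs. destruct (in_all_seqs _ _ _ Hbs) as [Hbl _].
    assert (0 <= (INR (wt bs) - INR n * q) ^ 2 / (de * INR n) ^ 2)
      by (apply Rmult_le_pos; [apply pow2_ge_0 | left; apply Rinv_0_lt_compat; lra]).
    assert (0 <= INR tau / INR n)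
      by (apply Rmult_le_pos; [apply pos_INR | left; apply Rinv_0_lt_compat; lra]).
    destruct (Rle_dec (Rabs (INR (wt bs) - q * INR n)) (de * INR n)) as [Ht | Ht].
    - destruct (Hcov bs Hbs Ht) as [c [HcL Hc]].
      pose proof (findi_spec (fun c => hdist bs c <=? tau) L []
                    (ex_intro _ c (conj HcL (proj2 (Nat.leb_le _ _) Hc)))) as Hnear.
      apply Nat.leb_le, le_INR in Hnear. fold (nearest tau L bs) in Hnear.
      assert (/ INR n * INR (hdist bs (nth (nearest tau L bs) L [])) <= INR tau / INR n)
        by (unfold Rdiv; rewrite Rmult_comm;
            apply Rmult_le_compat_r; [left; apply Rinv_0_lt_compat |]; lra).
      lra.
    - pose proof (le_INR _ _ (hdist_le bs (nth (nearest tau L bs) L []))) as Hh. rewrite Hbl in Hh.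
      assert (/ INR n * INR (hdist bs (nth (nearest tau L bs) L [])) <= 1)
        by (apply (Rmult_le_reg_l (INR n)); [lra |]; rewrite <- Rmult_assoc, Rinv_r; lra).
      assert ((de * INR n) ^ 2 < (INR (wt bs) - INR n * q) ^ 2).
      { rewrite <- (pow2_abs (INR (wt bs) - INR n * q)). replace (INR n * q) with (q * INR n) by ring.
        assert (0 < de * INR n) by nra. nra. }
      assert (1 < (INR (wt bs) - INR n * q) ^ 2 / (de * INR n) ^ 2).
      { apply (Rmult_lt_reg_r ((de * INR n) ^ 2)); auto.
        unfold Rdiv. rewrite Rmult_assoc, Rinv_l; lra. }
      lra. }
  unfold code_distortion.
  apply Rle_trans with (sumR (fun bs => bprob q bs *
     (INR tau / INR n + (INR (wt bs) - INR n * q) ^ 2 / (de * INR n) ^ 2)) (all_seqs BA n)).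
  { apply sumR_le_in. intros bs Hbs. apply Rmult_le_compat_l; [apply bprob_nonneg; lra | auto]. }
  rewrite (sumR_ext _ (fun bs => INR tau / INR n * bprob q bs
             + / (de * INR n) ^ 2 * (bprob q bs * (INR (wt bs) - INR n * q) ^ 2)))
    by (intros; unfold Rdiv; ring).
  rewrite sumR_plus, !sumR_scal, bprob_sum, weight_variance.
  right. field. split; lra.
Qed.

Lemma gather (Wl : list nat) (B : R) (Cov : nat -> list (list bool) -> Prop) :
  (forall w C C', Cov w C -> incl C C' -> Cov w C') ->
  (forall w, In w Wl -> exists C, INR (length C) <= B /\ Cov w C) ->
  exists L, INR (length L) <= INR (length Wl) * B /\ forall w, In w Wl -> Cov w L.
Proof.
  intros Hmono. induction Wl as [|w Wl IH]; intros H.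
  - exists []. simpl. split; [lra | intros _ []].
  - destruct IH as [L [HL HC]]; [intros; apply H; right; auto |].
    destruct (H w (or_introl eq_refl)) as [C [HCl HCw]].
    exists (C ++ L). split.
    + rewrite length_app, plus_INR. simpl length. rewrite S_INR. lra.
    + intros w' [<- | Hw'].
      * apply (Hmono _ C); auto. intros x Hx; apply in_or_app; auto.
      * apply (Hmono _ L); auto. intros x Hx; apply in_or_app; auto.
Qed.

Lemma typical_covering q D : 0 < q -> q <= / 2 -> 0 <= D < q -> exists K2,
  forall n tau de, 0 <= de -> D * INR n + de * INR n + 2 <= INR tau ->
  exists L : list (list bool),
    INR (length L) <= (INR n + 1) * ((INR n + 2) * exp (INR n * (He q - He D)
                        + de * INR n * slope q D + K2 + 2 * ln (INR n + 1))) /\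
    forall bs, In bs (all_seqs BA n) -> Rabs (INR (wt bs) - q * INR n) <= de * INR n ->
      exists c, In c L /\ (hdist bs c <= tau)%nat.
Proof.
  intros Hq Hq2 HD. destruct (weight_class_cover q D Hq Hq2 HD) as [K2 Hcc].
  exists K2. intros n tau de Hde Htau.
  set (Cov := fun w (C : list (list bool)) => Rabs (INR w - q * INR n) <= de * INR n ->
         forall x, In x (all_seqs BA n) -> wt x = w -> exists c, In c C /\ (hdist x c <= tau)%nat).
  set (B := (INR n + 2) * exp (INR n * (He q - He D) + de * INR n * slope q D + K2
                               + 2 * ln (INR n + 1))).
  destruct (gather (seq 0 (S n)) B Cov) as [L [HL HLcov]].
  - intros w C C' HC Hinc Hw x Hx Hxw. destruct (HC Hw x Hx Hxw) as [c [H1 H2]]. eauto.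
  - intros w Hw. apply in_seq in Hw.
    assert (0 <= B) by (apply Rmult_le_pos; [pose proof (pos_INR n); lra | left; apply exp_pos]).
    destruct (Rle_dec (Rabs (INR w - q * INR n)) (de * INR n)) as [Hwt | Hwt].
    + destruct (Hcc n w tau ltac:(lia) ltac:(lra)) as [C [HC1 HC2]].
      exists C. split; [| intros _; exact HC2].
      apply Rle_trans with (1 := HC1). apply Rmult_le_compat_l; [pose proof (pos_INR n); lra |].
      apply exp_le_mono.
      assert (0 <= slope q D) by apply Rabs_pos. nra.
    + exists []. split; [simpl; lra | intros Hw'; contradiction].
  - exists L. split; [rewrite length_seq, S_INR in HL; exact HL |].
    intros bs Hbs Hwt. apply (HLcov (wt bs)); auto.
    apply in_seq. pose proof (wt_le bs). destruct (in_all_seqs _ _ _ Hbs). lia.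
Qed.

Lemma poly_exp (c K : R) : 0 < c -> 0 <= K ->
  exists N : nat, forall n, (N <= n)%nat -> K * (INR n + 2) ^ 4 <= exp (c * INR n).
Proof.
  intros Hc HK. set (m := c / 5). assert (Hm : 0 < m) by (unfold m; lra).
  assert (Hm5 : 0 < m ^ 5) by (apply pow_lt; auto).
  destruct (eventually_ge (Rmax 2 (16 * K / m ^ 5))) as [N HN].
  exists N. intros n Hn. specialize (HN n Hn).
  assert (Hn2 : 2 <= INR n) by (pose proof (Rmax_l 2 (16 * K / m ^ 5)); lra).
  assert (H1 : 16 * K <= m ^ 5 * INR n).
  { assert (16 * K / m ^ 5 <= INR n) by (pose proof (Rmax_r 2 (16 * K / m ^ 5)); lra).
    apply (Rmult_le_compat_l (m ^ 5)) in H; [| lra].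
    replace (m ^ 5 * (16 * K / m ^ 5)) with (16 * K) in H by (field; lra). lra. }
  assert (H2 : (INR n + 2) ^ 4 <= 16 * INR n ^ 4).
  { replace (16 * INR n ^ 4) with ((2 * INR n) ^ 4) by ring. apply pow_incr. lra. }
  assert (H3 : 16 * K * INR n ^ 4 <= (m * INR n) ^ 5).
  { replace ((m * INR n) ^ 5) with (m ^ 5 * INR n * INR n ^ 4) by ring.
    apply Rmult_le_compat_r; [apply pow_le; lra | auto]. }
  assert (H4 : (m * INR n) ^ 5 <= exp (m * INR n) ^ 5).
  { apply pow_incr. split; [nra |]. pose proof (exp_ineq1_le (m * INR n)). lra. }
  rewrite exp_pow in H4.
  replace (INR 5 * (m * INR n)) with (c * INR n) in H4 by (unfold m; simpl; field).
  assert (0 <= INR n ^ 4) by (apply pow_le; lra). nra.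
Qed.

(** The union of the [n + 1] class codebooks fits, twice over, into [2^(n Rt)]
    messages when [Rt ln 2] exceeds the covering exponent [I] by [gap] and the
    typicality slack costs at most [gap / 4]. *)
Lemma codebook_rate (I gap K1 K2 de Rt : R) : 0 < gap -> Rt * ln 2 = I + gap ->
  0 <= de * K1 <= gap / 4 -> exists N, forall n, (N <= n)%nat ->
  2 * ((INR n + 1) * ((INR n + 2) * exp (INR n * I + de * INR n * K1 + K2 + 2 * ln (INR n + 1))))
  <= Rpower 2 (INR n * Rt).
Proof.
  intros Hgap HRt HdeK.
  destruct (poly_exp (3 * gap / 4) (2 * exp K2) ltac:(lra) ltac:(pose proof (exp_pos K2); lra))
    as [N HN].
  exists N. intros n Hn. specialize (HN n Hn). set (nn := INR n) in *.
  pose proof (pos_INR n) as Hn0. fold nn in Hn0.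
  assert (Hlog : exp (2 * ln (nn + 1)) = (nn + 1) ^ 2).
  { replace (2 * ln (nn + 1)) with (ln ((nn + 1) ^ 2)) by (rewrite ln_pow by lra; simpl INR; ring).
    apply exp_ln, pow_lt. lra. }
  rewrite !exp_plus, Hlog.
  unfold Rpower. replace (nn * Rt * ln 2) with (3 * gap / 4 * nn + (nn * I + nn * (gap / 4)))
    by (replace (nn * Rt * ln 2) with (nn * (Rt * ln 2)) by ring; rewrite HRt; field).
  rewrite (exp_plus (3 * gap / 4 * nn)).
  assert (Hx : exp (nn * I) * exp (de * nn * K1) <= exp (nn * I + nn * (gap / 4))).
  { rewrite <- exp_plus. apply exp_le_mono. nra. }
  assert (Hpoly : (nn + 1) * (nn + 2) * (nn + 1) ^ 2 <= (nn + 2) ^ 4).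
  { replace ((nn + 2) ^ 4) with ((nn + 2) * (nn + 2) * (nn + 2) ^ 2) by ring.
    apply Rmult_le_compat; try nra; apply pow_incr; lra. }
  pose proof (exp_pos K2). pose proof (exp_pos (nn * I)). pose proof (exp_pos (de * nn * K1)).
  apply Rle_trans with ((2 * exp K2 * (nn + 2) ^ 4) * (exp (nn * I) * exp (de * nn * K1))).
  - assert (0 <= (nn + 1) ^ 2) by (apply pow_le; lra).
    replace (2 * ((nn + 1) * ((nn + 2) * (exp (nn * I) * exp (de * nn * K1) * exp K2 * (nn + 1) ^ 2))))
      with ((2 * exp K2 * ((nn + 1) * (nn + 2) * (nn + 1) ^ 2)) * (exp (nn * I) * exp (de * nn * K1)))
      by ring.
    apply Rmult_le_compat_r; [nra |]. apply Rmult_le_compat_l; lra.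
  - apply Rmult_le_compat; try nra. pose proof (pow_le (nn + 2) 4). nra.
Qed.

Lemma nmsg_ge (n : nat) (Rt : R) (m : nat) : INR m <= Rpower 2 (INR n * Rt) -> (m <= nmsg n Rt)%nat.
Proof.
  intros H. unfold nmsg. destruct (base_Int_part (Rpower 2 (INR n * Rt))) as [H1 H2].
  assert (Z.of_nat m < Int_part (Rpower 2 (INR n * Rt)) + 1)%Z.
  { apply lt_IZR. rewrite plus_IZR, <- INR_IZR_INZ. simpl. lra. }
  lia.
Qed.

(** Some word of length [n >= 2] has typical weight (take weight [ceil (q n)]). *)
Lemma typical_word_exists q n de : 0 <= q <= / 2 -> (2 <= n)%nat -> 1 <= de * INR n ->
  exists bs, In bs (all_seqs BA n) /\ Rabs (INR (wt bs) - q * INR n) <= de * INR n.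
Proof.
  intros Hq Hn Hde. pose proof (le_INR _ _ Hn) as Hn2. simpl INR in Hn2.
  destruct (nat_ceil (q * INR n)) as [w0 [Hw1 Hw2]]; [nra |].
  assert (Hw0 : (w0 <= n)%nat) by (apply INR_le; nra).
  destruct (exists_wt n w0 Hw0) as [x0 [Hx0 Hx0w]].
  exists x0. split; [auto |]. rewrite Hx0w. apply Rabs_le. lra.
Qed.

(** Distortion [D = q] costs no rate: send nothing and reproduce the zero word. *)
Lemma zero_rate_code q Rt n : 0 <= Rt -> (1 <= n)%nat ->
  (0 < nmsg n Rt)%nat /\ code_distortion q n [[]] (fun _ => 0%nat) = q.
Proof.
  intros HRt Hn. split.
  - apply nmsg_ge. simpl INR. unfold Rpower. rewrite <- exp_0. apply exp_le_mono.
    pose proof ln2_pos. pose proof (pos_INR n). apply Rmult_le_pos; [apply Rmult_le_pos |]; lra.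
  - unfold code_distortion. simpl nth.
    rewrite (sumR_ext _ (fun bs => / INR n * (bprob q bs * INR (wt bs))))
      by (intros; rewrite hdist_nil; ring).
    rewrite sumR_scal, weight_mean. apply le_INR in Hn. simpl INR in Hn. field. lra.
Qed.

Lemma slack_choice (eps gap K : R) : 0 < eps -> 0 < gap -> 0 <= K ->
  exists de, 0 < de <= eps / 4 /\ 0 <= de * K <= gap / 4.
Proof.
  intros Heps Hgap HK. exists (Rmin (eps / 4) (gap / (4 * (K + 1)))).
  set (de := Rmin (eps / 4) (gap / (4 * (K + 1)))).
  assert (Hde : 0 < de) by (apply Rmin_pos; [lra | apply Rdiv_lt_0_compat; lra]).
  assert (Hde1 : de <= eps / 4) by apply Rmin_l.
  assert (Hde2 : de <= gap / (4 * (K + 1))) by apply Rmin_r.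
  repeat split; try lra; [nra |].
  apply Rle_trans with (gap / (4 * (K + 1)) * K); [apply Rmult_le_compat_r; auto |].
  apply (Rmult_le_reg_r (4 * (K + 1))); [lra |].
  replace (gap / (4 * (K + 1)) * K * (4 * (K + 1))) with (gap * K) by (field; lra). nra.
Qed.

Lemma distortion_budget (q D eps de nn tau : R) : 0 < eps -> 0 < de <= eps / 4 -> 0 < nn ->
  12 / eps <= nn -> 4 * q * (1 - q) / (de ^ 2 * eps) <= nn -> tau <= D * nn + de * nn + 3 ->
  tau / nn + q * (1 - q) / (de ^ 2 * nn) <= D + eps.
Proof.
  intros Heps Hde Hnn Hn3 Hn4 Htau.
  assert (tau / nn <= D + de + 3 / nn).
  { replace (D + de + 3 / nn) with ((D * nn + de * nn + 3) / nn) by (field; lra).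
    apply Rmult_le_compat_r; [left; apply Rinv_0_lt_compat |]; lra. }
  assert (3 / nn <= eps / 4).
  { apply (Rmult_le_reg_r nn); [lra |]. replace (3 / nn * nn) with 3 by (field; lra).
    apply (Rmult_le_compat_l (eps / 4)) in Hn3; [| lra].
    replace (eps / 4 * (12 / eps)) with 3 in Hn3 by (field; lra). lra. }
  assert (q * (1 - q) / (de ^ 2 * nn) <= eps / 4).
  { assert (0 < de ^ 2) by (apply pow_lt; lra).
    apply (Rmult_le_reg_r (de ^ 2 * nn)); [nra |].
    replace (q * (1 - q) / (de ^ 2 * nn) * (de ^ 2 * nn)) with (q * (1 - q)) by (field; lra).
    apply (Rmult_le_compat_l (de ^ 2 * eps / 4)) in Hn4; [| apply Rmult_le_pos; [nra | lra]].
    replace (de ^ 2 * eps / 4 * (4 * q * (1 - q) / (de ^ 2 * eps))) with (q * (1 - q)) in Hn4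
      by (field; lra). lra. }
  lra.
Qed.

Lemma covering_code q D Rt : 0 < q -> q <= / 2 -> 0 <= D < q -> Rt * ln 2 > He q - He D ->
  forall eps, eps > 0 -> exists N, forall n, (N <= n)%nat ->
  exists (L : list (list bool)) (enc : list bool -> nat),
    (forall bs, (enc bs < nmsg n Rt)%nat) /\ code_distortion q n L enc <= D + eps.
Proof.
  intros Hq Hq2 HD HR eps Heps.
  destruct (typical_covering q D Hq Hq2 HD) as [K2 HK2].
  set (gap := Rt * ln 2 - (He q - He D)).
  destruct (slack_choice eps gap (slope q D) Heps ltac:(unfold gap; lra) ltac:(apply Rabs_pos))
    as [de [Hde Hde2]].
  destruct (codebook_rate (He q - He D) gap (slope q D) K2 de Rt ltac:(unfold gap; lra)
              ltac:(unfold gap; ring) Hde2) as [N1 HN1].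
  destruct (eventually_ge 2) as [N2 HN2].
  destruct (eventually_ge (12 / eps)) as [N3 HN3].
  destruct (eventually_ge (4 * q * (1 - q) / (de ^ 2 * eps))) as [N4 HN4].
  destruct (eventually_ge (1 / de)) as [N5 HN5].
  exists (max (max N1 N2) (max N3 (max N4 N5))). intros n Hn.
  specialize (HN1 n ltac:(lia)). specialize (HN2 n ltac:(lia)). specialize (HN3 n ltac:(lia)).
  specialize (HN4 n ltac:(lia)). specialize (HN5 n ltac:(lia)).
  assert (Hn2 : (2 <= n)%nat) by (apply INR_le; simpl; lra).
  assert (Hnde : 1 <= de * INR n).
  { apply (Rmult_le_compat_l de) in HN5; [| lra].
    replace (de * (1 / de)) with 1 in HN5 by (field; lra). lra. }
  destruct (nat_ceil (D * INR n + de * INR n + 2)) as [tau [Htau1 Htau2]]; [nra |].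
  destruct (HK2 n tau de ltac:(lra) Htau1) as [L [HL Hcov]].
  exists L, (nearest tau L). split.
  - (* [L] is nonempty, so [|L| + 1 <= 2 |L| <= 2^(n Rt)] *)
    destruct (typical_word_exists q n de ltac:(lra) Hn2 Hnde) as [bs0 [Hbs0 Hwt0]].
    destruct (Hcov bs0 Hbs0 Hwt0) as [c0 [Hc0 _]].
    assert (HL1 : 1 <= INR (length L)).
    { destruct L as [|c L']; [destruct Hc0 |].
      simpl length. rewrite S_INR. pose proof (pos_INR (length L')). lra. }
    intros bs. apply Nat.lt_le_trans with (S (length L)); [apply Nat.lt_succ_r, findi_le |].
    apply nmsg_ge. rewrite S_INR. lra.
  - apply Rle_trans
      with (1 := covering_code_distortion q n tau de L ltac:(lra) ltac:(lia) ltac:(lra) Hcov).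
    apply distortion_budget; lra.
Qed.

Theorem binary_source_coding q D Rt : 0 < q -> q <= / 2 -> 0 <= D <= q -> Rt > Hb q - Hb D ->
  forall eps, eps > 0 -> exists N, forall n, (N <= n)%nat ->
  exists (L : list (list bool)) (enc : list bool -> nat),
    (forall bs, (enc bs < nmsg n Rt)%nat) /\ code_distortion q n L enc <= D + eps.
Proof.
  intros Hq Hq2 [HD0 HDq] HR eps Heps. pose proof ln2_pos.
  rewrite !Hb_He in HR. unfold Rdiv in HR. rewrite <- Rmult_minus_distr_r in HR.
  assert (HR' : Rt * ln 2 > He q - He D).
  { apply (Rmult_gt_compat_r (ln 2)) in HR; [| lra]. rewrite Rmult_assoc, Rinv_l in HR; lra. }
  destruct (Req_dec D q) as [-> | HDne].
  - exists 1%nat. intros n Hn.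
    destruct (zero_rate_code q Rt n ltac:(nra) Hn) as [Hmsg Hdist].
    exists [[]], (fun _ => 0%nat). split; [auto | lra].
  - apply covering_code; auto; lra.
Qed.

(** ** Reduction of the distortion criterion to binary codes *)

Lemma avg_dist_binary_code {X Y : Type} (XA : list X) (YA : list Y) (pmf : X -> Y -> R)
  (f : X -> Y -> bool) (pi : R)
  (hsum : forall H : bool -> R,
     sumR (fun x => sumR (fun y => pmf x y * H (f x y)) YA) XA = pi * H true + (1 - pi) * H false)
  n phi0 phiX phiY (psi : nat -> nat -> nat -> bool) (L : list (list bool)) (enc : list bool -> nat) :
  (forall xs ys, In xs (all_seqs XA n) -> In ys (all_seqs YA n) ->
     psi (phiX xs) (phiY ys (phi0 xs))
     = fun j => nth j (nth (enc (map (fun xy => f (fst xy) (snd xy)) (combine xs ys))) L []) false) ->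
  avg_dist XA YA pmf f hamming n phi0 phiX phiY psi = code_distortion pi n L enc.
Proof.
  intros Hpsi. unfold avg_dist, code_distortion.
  rewrite <- (pushforward XA YA pmf f pi hsum n
                (fun bs => / INR n * INR (hdist bs (nth (enc bs) L [])))).
  apply sumR_ext_in. intros xs Hxs. apply sumR_ext_in. intros ys Hys.
  rewrite (Hpsi xs ys Hxs Hys), <- sum_idx_hdist, sum_idx_map. reflexivity.
Qed.

(** ** The example *)

(** Base-3 numerals of digit strings (least significant digit first) and the
    decoding of the first [n] digits, shifted to the alphabet {1,2,3}. *)
Fixpoint code3 (l : list nat) : nat := match l with [] => 0%nat | d :: l' => (d + 3 * code3 l')%nat end.
Fixpoint dec3 (n m : nat) : list nat :=
  match n with O => [] | S n' => (m mod 3 + 1)%nat :: dec3 n' (m / 3) end.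
Definition digit (x : nat * bool) : nat := ((fst x + 2) mod 3)%nat.

Lemma code3_bound ds : (forall d, In d ds -> d < 3)%nat -> (code3 ds < 3 ^ length ds)%nat.
Proof.
  induction ds; simpl; intros H; [lia |].
  specialize (IHds (fun d Hd => H d (or_intror Hd))). specialize (H a (or_introl eq_refl)). nia.
Qed.

Lemma dec3_code3 ds : (forall d, In d ds -> d < 3)%nat ->
  dec3 (length ds) (code3 ds) = map (fun d => (d + 1)%nat) ds.
Proof.
  induction ds as [|d ds IH]; cbn [dec3 code3 map length]; intros H; auto.
  specialize (IH (fun e He => H e (or_intror He))). specialize (H d (or_introl eq_refl)).
  assert (E1 : ((d + 3 * code3 ds) mod 3 = d)%nat)
    by (rewrite Nat.mul_comm, Nat.Div0.mod_add; apply Nat.mod_small; auto).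
  assert (E2 : ((d + 3 * code3 ds) / 3 = code3 ds)%nat)
    by (rewrite Nat.mul_comm, Nat.div_add, Nat.div_small by lia; lia).
  rewrite E1, E2, IH. reflexivity.
Qed.

Definition phi0_ex (n : nat) (xs : list (nat * bool)) : nat := (code3 (map digit xs) mod 3 ^ n)%nat.

Lemma phi0_ex_decodes n xs : In xs (all_seqs XA_ex n) -> dec3 n (phi0_ex n xs) = map fst xs.
Proof.
  intros Hxs. destruct (in_all_seqs _ _ _ Hxs) as [Hl Hin].
  assert (Hd : forall d, In d (map digit xs) -> (d < 3)%nat).
  { intros d Hd. apply in_map_iff in Hd. destruct Hd as [x [<- _]]. apply Nat.mod_upper_bound. lia. }
  pose proof (code3_bound _ Hd) as Hb. rewrite length_map, Hl in Hb.
  unfold phi0_ex. rewrite Nat.mod_small by auto.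
  rewrite <- Hl at 1. rewrite <- (length_map digit xs), dec3_code3, map_map by auto.
  apply map_ext_in. intros x Hx. specialize (Hin x Hx). unfold XA_ex in Hin. simpl in Hin.
  destruct Hin as [<- | [<- | [<- | [<- | [<- | [<- | []]]]]]]; reflexivity.
Qed.

Lemma ternary_rate n R0 : R0 > log2 3 -> (1 <= n)%nat -> (3 ^ n <= nmsg n R0)%nat.
Proof.
  intros H0 Hn. pose proof ln2_pos. apply nmsg_ge. rewrite pow_INR. simpl INR.
  replace (1 + 1 + 1) with 3 by ring. rewrite pow_exp_ln by lra. unfold Rpower.
  assert (ln 3 < R0 * ln 2).
  { unfold log2 in H0. apply (Rmult_gt_compat_r (ln 2)) in H0; auto.
    replace (ln 3 / ln 2 * ln 2) with (ln 3) in H0 by (field; lra). lra. }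
  apply exp_le_mono. pose proof (pos_INR n). assert (1 <= INR n) by (apply (le_INR 1); lia). nra.
Qed.

Lemma f1_ex_law p (H : bool -> R) :
  sumR (fun x => sumR (fun y => pmf_ex p x y * H (f1_ex x y)) YA_ex) XA_ex
  = / 3 * H true + (1 - / 3) * H false.
Proof. unfold XA_ex, YA_ex, pmf_ex, f1_ex. simpl. field. Qed.

Lemma f2_ex_law p (H : bool -> R) :
  sumR (fun x => sumR (fun y => pmf_ex p x y * H (f2_ex x y)) YA_ex) XA_ex
  = p * H true + (1 - p) * H false.
Proof. unfold XA_ex, YA_ex, pmf_ex, f2_ex. simpl. field. Qed.

Lemma map_combine_f1 (xs : list (nat * bool)) (ys : list nat) :
  map (fun pr => Nat.eqb (fst pr) (snd pr)) (combine (map fst xs) ys)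
  = map (fun xy => f1_ex (fst xy) (snd xy)) (combine xs ys).
Proof. revert ys; induction xs; intros [|y ys]; simpl; auto. rewrite IHxs. reflexivity. Qed.

Lemma map_combine_f2 (xs : list (nat * bool)) (ys : list nat) : length xs = length ys ->
  map snd xs = map (fun xy => f2_ex (fst xy) (snd xy)) (combine xs ys).
Proof.
  revert ys; induction xs; intros [|y ys] H; simpl in *; try lia; auto.
  rewrite (IHxs ys) by lia. reflexivity.
Qed.

Theorem example_achievable (p D2 : R) : 0 < p -> p <= / 2 -> 0 <= D2 -> D2 <= p ->
  forall R0 RX RY : R, R0 > log2 3 -> RX > Hb p - Hb D2 -> RY > Hb (/ 3) ->
  achievable XA_ex YA_ex (pmf_ex p) f1_ex f2_ex hamming hamming R0 RX RY 0 D2.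
Proof.
  intros Hp Hp2 HD0 HDp R0 RX RY H0 HX HY eps Heps.
  assert (HY0 : RY > Hb (/ 3) - Hb 0) by (rewrite (Hb_He 0), He0; unfold Rdiv; rewrite Rmult_0_l; lra).
  destruct (binary_source_coding (/ 3) 0 RY ltac:(lra) ltac:(lra) ltac:(lra) HY0 eps Heps) as [NY HNY].
  destruct (binary_source_coding p D2 RX Hp Hp2 (conj HD0 HDp) HX eps Heps) as [NX HNX].
  exists (max (max NY NX) 1). intros n Hn.
  destruct (HNY n ltac:(lia)) as [LY [encY [HencY HdY]]].
  destruct (HNX n ltac:(lia)) as [LX [encX [HencX HdX]]].
  set (phiX := fun xs : list (nat * bool) => encX (map snd xs)).
  set (phiY := fun (ys : list nat) (m : nat) =>
                 encY (map (fun pr => Nat.eqb (fst pr) (snd pr)) (combine (dec3 n m) ys))).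
  exists (phi0_ex n), phiX, phiY, (fun _ mY j => nth j (nth mY LY []) false),
    (fun mX _ j => nth j (nth mX LX []) false).
  repeat split.
  - intros xs. apply Nat.lt_le_trans with (3 ^ n)%nat; [| apply ternary_rate; auto; lia].
    apply Nat.mod_upper_bound, Nat.pow_nonzero. lia.
  - intros xs. apply HencX.
  - intros ys m. apply HencY.
  - rewrite (avg_dist_binary_code _ _ _ _ _ (f1_ex_law p) _ _ _ _ _ LY encY).
    + lra.
    + intros xs ys Hxs _. unfold phiY. rewrite phi0_ex_decodes, map_combine_f1 by auto. reflexivity.
  - rewrite (avg_dist_binary_code _ _ _ _ _ (f2_ex_law p) _ _ _ _ _ LX encX).
    + exact HdX.
    + intros xs ys Hxs Hys. unfold phiX.
      destruct (in_all_seqs _ _ _ Hxs). destruct (in_all_seqs _ _ _ Hys).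
      rewrite (map_combine_f2 xs ys) by lia. reflexivity.
Qed.

Theorem mainTheorem8 (p D2 : R) :
  0 < p -> p <= / 2 -> 0 <= D2 -> D2 <= p -> D2 < / 2 ->
  (forall R0 RX RY : R,
     R0 > log2 3 -> RX > Hb p - Hb D2 -> RY > Hb (/ 3) ->
     achievable XA_ex YA_ex (pmf_ex p) f1_ex f2_ex hamming hamming R0 RX RY 0 D2)
  /\
  (* H(X1|Y) = log2 3 and H(f1(X,Y)) = H_b(1/3) *)
  (forall R0 : R, R0 > log2 3 ->
   forall delta : R, delta > 0 ->
   exists RX RY : R,
     achievable XA_ex YA_ex (pmf_ex p) f1_ex f2_ex hamming hamming R0 RX RY 0 D2 /\
     RX + RY < Hb (/ 3) + Hb p - Hb D2 + delta).
Proof.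
  intros Hp Hp2 HD0 HDp _. split.
  - apply example_achievable; auto.
  -
    intros R0 HR0 delta Hd. exists (Hb p - Hb D2 + delta / 3), (Hb (/ 3) + delta / 3). split.
    + apply example_achievable; auto; lra.
    + lra.
Qed.
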